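(* Let $\xi$ be a pure-like mixture (as defined in the context, in particular not of the form $x^p$). Then for sufficiently small $\varepsilon>0$ there exists a constant $\alpha>0$ such that $$F(x,y)<0\quad\text{for all }x\in(-E_0-\varepsilon,-E_0+\varepsilon),\ y\in\mathbb R\setminus(-y_0-\alpha\sqrt\varepsilon,-y_0+\alpha\sqrt\varepsilon),$$ and there exists a constant $\beta>0$ such that $$F(x,y)<\beta\sqrt\varepsilon\quad\text{for all }x\in(-E_0-\varepsilon,-E_0+\varepsilon),\ y\in(-y_0-\alpha\sqrt\varepsilon,-y_0+\alpha\sqrt\varepsilon).$$
   Context: $\xi(x)=\sum_{p\ge2}\gamma_p^2x^p$ with deterministic $\gamma_p$, $\sum_{p\ge2}2^p\gamma_p^2<\infty$ and $\xi(1)=1$; write $\xi'=\xi'(1)$, $\xi''=\xi''(1)$. $\xi$ is called pure-like if $G:=\log\frac{\xi''}{\xi'}-\frac{(\xi''-\xi')(\xi''-\xi'+\xi'^2)}{\xi''\xi'^2}>0$; here it is also assumed that $\xi$ is a genuine mixture (not $x^p$), so that $\xi''+\xi'-\xi'^2>0$. Let $\sigma_{\mathrm{sc}}$ be the standard semicircle law (density $\frac1{2\pi}\sqrt{4-t^2}$ on $[-2,2]$) and $\Psi_*(x)=\int\log|x-t|\,\sigma_{\mathrm{sc}}(dt)$, i.e. $\Psi_*(x)=\frac{x^2}4-\frac12$ for $|x|\le2$ and $\Psi_*(x)=\frac{x^2}4-\frac12-\big[\frac{|x|}4\sqrt{x^2-4}-\log(\sqrt{x^2/4-1}+|x|/2)\big]$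 for $|x|>2$. Define $$F(x,y)=\tfrac12+\tfrac12\log\tfrac{\xi''}{\xi'}-\tfrac{x^2}2-\frac{(y-\xi'x)^2}{2(\xi''+\xi'-\xi'^2)}+\Psi_*\Big(\frac{y}{\sqrt{\xi''}}\Big).$$ Let $-E_0=\min\{x:\sup_{y\in\mathbb R}F(x,y)=0\}$ and let $-y_0$ be the maximizer of $y\mapsto F(-E_0,y)$ (which for pure-like $\xi$ is unique and satisfies $-y_0<-2\sqrt{\xi''}$). *)

From Stdlib Require Import Reals Lra.
From Coquelicot Require Import Coquelicot.
Open Scope R_scope.

Definition xi_coef (gamma : nat -> R) (p : nat) : R := (gamma p) ^ 2.

Definition xi (gamma : nat -> R) (x : R) : R := PSeries (xi_coef gamma) x.

Definition xi1 (gamma : nat -> R) : R := Derive (xi gamma) 1.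
Definition xi2 (gamma : nat -> R) : R := Derive (Derive (xi gamma)) 1.

Definition admissible_mixture (gamma : nat -> R) : Prop :=
  gamma 0%nat = 0 /\ gamma 1%nat = 0 /\
  ex_series (fun p => 2 ^ p * (gamma p) ^ 2) /\
  xi gamma 1 = 1.

Definition genuine_mixture (gamma : nat -> R) : Prop :=
  ~ (exists p : nat, forall x : R, xi gamma x = x ^ p).

Definition G_const (gamma : nat -> R) : R :=
  let a := xi1 gamma in let b := xi2 gamma in
  ln (b / a) - (b - a) * (b - a + a ^ 2) / (b * a ^ 2).

Definition pure_like (gamma : nat -> R) : Prop := G_const gamma > 0.

(* Psi_*(x) = int log|x-t| sigma_sc(dt), explicit formula *)
Definition Psi_star (x : R) : R :=
  if Rle_dec (Rabs x) 2 then x ^ 2 / 4 - 1 / 2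
  else x ^ 2 / 4 - 1 / 2
       - (Rabs x / 4 * sqrt (x ^ 2 - 4) - ln (sqrt (x ^ 2 / 4 - 1) + Rabs x / 2)).

Definition F (gamma : nat -> R) (x y : R) : R :=
  let a := xi1 gamma in let b := xi2 gamma in
  1 / 2 + 1 / 2 * ln (b / a) - x ^ 2 / 2
  - (y - a * x) ^ 2 / (2 * (b + a - a ^ 2))
  + Psi_star (y / sqrt b).

Definition supF_eq0 (gamma : nat -> R) (x : R) : Prop :=
  is_lub (fun v => exists y, v = F gamma x y) 0.

Definition is_E0 (gamma : nat -> R) (E0 : R) : Prop :=
  supF_eq0 gamma (- E0) /\ (forall x, supF_eq0 gamma x -> - E0 <= x).

Definition is_y0 (gamma : nat -> R) (E0 y0 : R) : Prop :=
  forall y, F gamma (- E0) y <= F gamma (- E0) (- y0).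

From Stdlib Require Import Reals Lra.
From Coquelicot Require Import Coquelicot.
Open Scope R_scope.

(* Write a = xi', b = xi'' and D = b + a - a^2.  Then Psi_*(u) = u^2/4 - 1/2 - H(u)
   with H convex, H = 0 on [-2, 2] and H'(u) = sqrt(u^2 - 4)/2 for u > 2, so
   y |-> F(x, y) is a quadratic with leading coefficient -(1/(2D) - 1/(4b))
   minus a convex function.  Since Psi_* is unbounded above, sup_y F(-E0, y) = 0
   forces D > 0, and
   pure-likeness forces b > a - a^2, i.e. strict concavity.  As F(-E0, .) <= 0
   vanishes at -y0, the midpoint inequality gives F(-E0, y) <= -k (y + y0)^2.
   In x, F is a concave quadratic whose slope at -E0 grows linearly in y, so for
   |x + E0| < eps we get F(x, y) <= -k d^2 + eps (A + B d) with d = |y + y0|;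
   comparing both terms at the scale d ~ sqrt eps yields alpha and beta. *)

Lemma CV_radius_ge_disk (a : nat -> R) (r : R) : CV_disk a r -> Rbar_le r (CV_radius a).
Proof. exact (proj1 (Lub_Rbar_correct (CV_disk a)) r). Qed.

Lemma Derive_n_PSeries_1_nonneg (a : nat -> R) (n : nat) :
  Rbar_lt 1 (CV_radius a) -> (forall k, 0 <= a k) -> 0 <= Derive_n (PSeries a) n 1.
Proof.
  intros Hr Ha.
  rewrite <- Rabs_R1 in Hr.
  rewrite (Derive_n_PSeries n a 1 Hr), PSeries_1, <- (PSeries_const_0 1), PSeries_1.
  apply Series_le.
  - intros k. split; [lra|]. unfold PS_derive_n.
    apply Rmult_le_pos; [|apply Ha].
    apply Rdiv_le_0_compat; [apply pos_INR | apply lt_0_INR, Factorial.lt_O_fact].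
  - apply ex_pseries_1, CV_radius_inside. rewrite CV_radius_derive_n. exact Hr.
Qed.

Lemma xi2_nonneg (gamma : nat -> R) : admissible_mixture gamma -> 0 <= xi2 gamma.
Proof.
  intros (_ & _ & Hex & _).
  change (0 <= Derive_n (PSeries (xi_coef gamma)) 2 1).
  apply Derive_n_PSeries_1_nonneg; [|intros k; apply pow2_ge_0].
  apply Rbar_lt_le_trans with 2; [simpl; lra|].
  apply CV_radius_ge_disk. eapply ex_series_ext; [|exact Hex].
  intros p. unfold xi_coef. rewrite Rabs_right; [apply Rmult_comm|].
  apply Rle_ge, Rmult_le_pos; [apply pow2_ge_0 | apply pow_le; lra].
Qed.

Lemma xi2_gt_of_G_pos (a b : R) : 0 < b ->
  ln (b / a) - (b - a) * (b - a + a ^ 2) / (b * a ^ 2) > 0 -> a - a ^ 2 < b.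
Proof.
  intros Hb HG. destruct (Rlt_le_dec (a - a ^ 2) b) as [Hlt | Hle]; [exact Hlt | exfalso].
  assert (Ha : 0 < a < 1) by (split; nra).
  assert (Hln : ln (b / a) < 0).
  { rewrite <- ln_1. apply ln_increasing; [apply Rdiv_lt_0_compat; lra|].
    apply Rlt_div_l; nra. }
  assert (Hfrac : 0 <= (b - a) * (b - a + a ^ 2) / (b * a ^ 2)).
  { apply Rdiv_le_0_compat; [| apply Rmult_lt_0_compat; [lra | apply pow_lt; lra]].
    replace ((b - a) * (b - a + a ^ 2)) with ((a - b) * (a - a ^ 2 - b)) by ring.
    apply Rmult_le_pos; nra. }
  lra.
Qed.

Lemma xi2_pos (gamma : nat -> R) :
  admissible_mixture gamma -> pure_like gamma -> 0 < xi2 gamma.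
Proof.
  intros Hadm Hpl. destruct (xi2_nonneg gamma Hadm) as [Hb | Hb]; [exact Hb | exfalso].
  unfold pure_like, G_const in Hpl. cbv zeta in Hpl. rewrite <- Hb in Hpl.
  (* with [xi'' = 0] both terms of G are junk values: [ln 0 = 0] and [_ / 0 = 0] *)
  unfold Rdiv in Hpl. rewrite Rmult_0_l, Rmult_0_l, Rinv_0, Rmult_0_r in Hpl.
  unfold ln in Hpl. destruct (Rlt_dec 0 0); lra.
Qed.

Lemma tangent_le_of_derive_nondecreasing (f df : R -> R) (lo w z : R) :
  (forall x, lo < x -> is_derive f x (df x)) ->
  (forall x, lo <= x -> continuous f x) ->
  (forall x y, lo <= x <= y -> df x <= df y) ->
  lo <= w -> lo <= z -> f w + df w * (z - w) <= f z.
Proof.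
  intros Hd Hc Hmon Hw Hz.
  assert (Hlo : lo <= Rmin w z) by (apply Rmin_glb; assumption).
  destruct (MVT_gen f w z df) as [c [Hcwz Hmvt]].
  - intros x Hx. apply Hd. lra.
  - intros x Hx. apply continuity_pt_filterlim, Hc. lra.
  - assert (Hslope : df w * (z - w) <= df c * (z - w)).
    { destruct (Rle_lt_dec w z) as [Hwz | Hwz].
      + rewrite Rmin_left, Rmax_right in Hcwz by lra.
        apply Rmult_le_compat_r; [lra | apply Hmon; lra].
      + rewrite Rmin_right, Rmax_left in Hcwz by lra.
        assert (df c <= df w) by (apply Hmon; lra). nra. }
    lra.
Qed.

Lemma midpoint_convex_of_subgradient (f : R -> R) :
  (forall w, exists g, forall z, f w + g * (z - w) <= f z) ->
  forall x y, f ((x + y) / 2) <= (f x + f y) / 2.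
Proof.
  intros Hsub x y. destruct (Hsub ((x + y) / 2)) as [g Hg].
  pose proof (Hg x). pose proof (Hg y). lra.
Qed.

Definition gap_out (v : R) : R :=
  v / 4 * sqrt (v ^ 2 - 4) - ln (sqrt (v ^ 2 - 4) / 2 + v / 2).

Lemma gap_out_2 : gap_out 2 = 0.
Proof.
  unfold gap_out. replace (2 ^ 2 - 4) with 0 by ring. rewrite sqrt_0.
  replace (0 / 2 + 2 / 2) with 1 by field. rewrite ln_1. ring.
Qed.

Lemma gap_out_derive (v : R) : 2 < v -> is_derive gap_out v (sqrt (v ^ 2 - 4) / 2).
Proof.
  intros Hv. unfold gap_out.
  assert (Hp : 0 < v ^ 2 - 4) by nra.
  pose proof (sqrt_lt_R0 _ Hp) as Hr.
  auto_derive; replace (v * (v * 1) + - (4)) with (v ^ 2 - 4) by ring.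
  - repeat split; lra.
  - assert (Hsq : v ^ 2 = sqrt (v ^ 2 - 4) ^ 2 + 4) by (rewrite pow2_sqrt; lra).
    set (r := sqrt (v ^ 2 - 4)) in *.
    transitivity (r / 4 + v ^ 2 / (4 * r) - 1 / r); [field | rewrite Hsq; field]; lra.
Qed.

Lemma gap_out_continuous (v : R) : 2 <= v -> continuous gap_out v.
Proof.
  intros Hv.
  assert (Hs : continuous (fun v => sqrt (v ^ 2 - 4)) v).
  { apply continuous_sqrt_comp, (ex_derive_continuous (fun v => v ^ 2 - 4)).
    auto_derive. auto. }
  assert (Hdiv : forall c, continuous (fun v : R => v / c) v).
  { intros c. apply (ex_derive_continuous (fun v => v / c)). auto_derive. auto. }
  unfold gap_out. apply (continuous_minus (fun v => v / 4 * sqrt (v ^ 2 - 4))).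
  - apply (continuous_mult (fun v => v / 4)); [apply Hdiv | exact Hs].
  - apply (continuous_comp (fun v => sqrt (v ^ 2 - 4) / 2 + v / 2) ln).
    + apply (continuous_plus (fun v => sqrt (v ^ 2 - 4) / 2)); [|apply Hdiv].
      apply (continuous_mult _ (fun _ => / 2)); [exact Hs | apply continuous_const].
    + apply continuous_ln. pose proof (sqrt_pos (v ^ 2 - 4)). lra.
Qed.

Lemma gap_out_tangent (w z : R) : 2 <= w -> 2 <= z ->
  gap_out w + sqrt (w ^ 2 - 4) / 2 * (z - w) <= gap_out z.
Proof.
  apply (tangent_le_of_derive_nondecreasing gap_out (fun v => sqrt (v ^ 2 - 4) / 2)).
  - exact gap_out_derive.
  - exact gap_out_continuous.
  - intros x y Hxy. apply Rmult_le_compat_r; [lra|]. apply sqrt_le_1_alt. nra.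
Qed.

Lemma gap_out_nonneg (z : R) : 2 <= z -> 0 <= gap_out z.
Proof.
  intros Hz. pose proof (gap_out_tangent 2 z (Rle_refl 2) Hz) as Ht.
  rewrite gap_out_2 in Ht. replace (2 ^ 2 - 4) with 0 in Ht by ring.
  rewrite sqrt_0 in Ht. lra.
Qed.

(* The H of the header: clamping at 2 makes it vanish on [-2, 2], as [gap_out 2 = 0]. *)
Definition psi_gap (u : R) : R := gap_out (Rmax 2 (Rabs u)).

Lemma psi_gap_subgradient (w : R) :
  exists g, forall z, psi_gap w + g * (z - w) <= psi_gap z.
Proof.
  assert (Hz2 : forall z, 2 <= Rmax 2 (Rabs z)) by (intros z; apply Rmax_l).
  unfold psi_gap. destruct (Rle_dec (Rabs w) 2) as [Hw | Hw].
  - exists 0. intros z. rewrite Rmax_left, gap_out_2 by exact Hw.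
    pose proof (gap_out_nonneg _ (Hz2 z)). lra.
  - rewrite Rmax_right by lra.
    set (g := sqrt (Rabs w ^ 2 - 4) / 2).
    assert (Hg : 0 <= g) by (apply Rmult_le_pos; [apply sqrt_pos | lra]).
    exists (if Rle_dec 0 w then g else - g). intros z.
    pose proof (gap_out_tangent (Rabs w) _ ltac:(lra) (Hz2 z)) as Ht.
    assert (Hmax : Rabs z <= Rmax 2 (Rabs z)) by apply Rmax_r.
    assert (Hlin : (if Rle_dec 0 w then g else - g) * (z - w)
                   <= g * (Rmax 2 (Rabs z) - Rabs w)).
    { pose proof (Rle_abs z). pose proof (Rle_abs (- z)). rewrite Rabs_Ropp in *.
      destruct (Rle_dec 0 w).
      + rewrite (Rabs_right w) by lra. apply Rmult_le_compat_l; lra.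
      + rewrite (Rabs_left w) by lra. replace (- g * (z - w)) with (g * (- z - - w)) by ring.
        apply Rmult_le_compat_l; lra. }
    fold g in Ht. lra.
Qed.

Lemma psi_gap_midpoint_convex (x y : R) :
  psi_gap ((x + y) / 2) <= (psi_gap x + psi_gap y) / 2.
Proof. apply midpoint_convex_of_subgradient, psi_gap_subgradient. Qed.

Lemma Psi_star_eq_gap (u : R) : Psi_star u = u ^ 2 / 4 - 1 / 2 - psi_gap u.
Proof.
  unfold Psi_star, psi_gap. destruct (Rle_dec (Rabs u) 2) as [Hu | Hu].
  - rewrite Rmax_left, gap_out_2 by exact Hu. ring.
  - rewrite Rmax_right by lra. unfold gap_out.
    replace (u ^ 2 / 4 - 1) with ((Rabs u ^ 2 - 4) / 4) by (rewrite pow2_abs; field).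
    rewrite sqrt_div_alt, pow2_abs by lra.
    replace (sqrt 4) with 2 by (rewrite <- (sqrt_pow2 2) by lra; f_equal; ring).
    ring.
Qed.

Lemma Psi_star_unbounded (M : R) : exists u, M <= Psi_star u.
Proof.
  set (N := Rabs M + 1).
  assert (HN : M + 1 / 2 <= N) by (unfold N; pose proof (Rle_abs M); lra).
  assert (HeN : 1 < exp N).
  { rewrite <- exp_0. apply exp_increasing. pose proof (Rabs_pos M). unfold N. lra. }
  set (u := 2 * exp N).
  exists u. rewrite Psi_star_eq_gap. unfold psi_gap.
  rewrite Rabs_right, Rmax_right by (unfold u; lra). unfold gap_out.
  assert (Hr2 : sqrt (u ^ 2 - 4) ^ 2 = u ^ 2 - 4) by (apply pow2_sqrt; unfold u; nra).
  set (r := sqrt (u ^ 2 - 4)) in *.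
  assert (Hr : 0 <= r) by apply sqrt_pos.
  assert (Hln : N <= ln (r / 2 + u / 2)).
  { replace N with (ln (u / 2)) by (unfold u; rewrite <- ln_exp; f_equal; field).
    apply ln_le; unfold u in *; lra. }
  assert (u / 4 * r <= u ^ 2 / 4) by (unfold u in *; nra).
  lra.
Qed.

Definition F_ab (a b x y : R) : R :=
  1 / 2 + 1 / 2 * ln (b / a) - x ^ 2 / 2
  - (y - a * x) ^ 2 / (2 * (b + a - a ^ 2)) + Psi_star (y / sqrt b).

Lemma F_ab_denom_pos (a b x0 M : R) : 0 < b ->
  (forall y, F_ab a b x0 y <= M) -> 0 < b + a - a ^ 2.
Proof.
  intros Hb Hup. destruct (Rlt_le_dec 0 (b + a - a ^ 2)) as [HD | HD]; [exact HD | exfalso].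
  set (C := 1 / 2 + 1 / 2 * ln (b / a) - x0 ^ 2 / 2).
  destruct (Psi_star_unbounded (M - C + 1)) as [u Hu].
  specialize (Hup (sqrt b * u)). unfold F_ab in Hup. fold C in Hup.
  replace (sqrt b * u / sqrt b) with u in Hup by (field; apply Rgt_not_eq, sqrt_lt_R0, Hb).
  (* when the denominator vanishes, division by 0 gives 0 *)
  assert (Hq : (sqrt b * u - a * x0) ^ 2 / (2 * (b + a - a ^ 2)) <= 0).
  { destruct (Req_dec (b + a - a ^ 2) 0) as [E | E].
    - rewrite E, Rmult_0_r. unfold Rdiv. rewrite Rinv_0, Rmult_0_r. lra.
    - assert (/ (2 * (b + a - a ^ 2)) < 0) by (apply Rinv_neg; lra).
      pose proof (pow2_ge_0 (sqrt b * u - a * x0)). unfold Rdiv. nra. }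
  lra.
Qed.

Lemma F_ab_midpoint (a b x0 y z : R) : 0 < b -> 0 < b + a - a ^ 2 ->
  (F_ab a b x0 y + F_ab a b x0 z) / 2
  + (1 / (2 * (b + a - a ^ 2)) - 1 / (4 * b)) / 4 * (y - z) ^ 2
  <= F_ab a b x0 ((y + z) / 2).
Proof.
  intros Hb HD. unfold F_ab. rewrite !Psi_star_eq_gap.
  pose proof (psi_gap_midpoint_convex (y / sqrt b) (z / sqrt b)) as Hc.
  assert (Hs : 0 < sqrt b) by (apply sqrt_lt_R0; exact Hb).
  replace ((y / sqrt b + z / sqrt b) / 2) with ((y + z) / 2 / sqrt b) in Hc by (field; lra).
  assert (Hbs : b = sqrt b * sqrt b) by (symmetry; apply sqrt_sqrt; lra).
  set (g1 := psi_gap (y / sqrt b)) in *. set (g2 := psi_gap (z / sqrt b)) in *.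
  set (gm := psi_gap ((y + z) / 2 / sqrt b)) in *.
  set (s := sqrt b) in *. clearbody g1 g2 gm s. subst b.
  match goal with |- ?lhs <= ?rhs => enough (E : rhs - lhs = (g1 + g2) / 2 - gm) by lra end.
  field. lra.
Qed.

Lemma quadratic_decay_of_midpoint (f : R -> R) (c ys : R) :
  (forall y z, (f y + f z) / 2 + c / 4 * (y - z) ^ 2 <= f ((y + z) / 2)) ->
  (forall y, f y <= 0) -> f ys = 0 ->
  forall y, f y <= - (c / 2) * (y - ys) ^ 2.
Proof.
  intros Hmid Hle H0 y. pose proof (Hmid y ys). pose proof (Hle ((y + ys) / 2)). lra.
Qed.

Lemma F_ab_shift (a b x0 x y : R) : 0 < b + a - a ^ 2 ->
  F_ab a b x y = F_ab a b x0 y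
    + (x - x0) * (- x0 + a * (y - a * x0) / (b + a - a ^ 2))
    - (1 / 2 + a ^ 2 / (2 * (b + a - a ^ 2))) * (x - x0) ^ 2.
Proof. intros HD. unfold F_ab. field. lra. Qed.

Lemma F_ab_perturbation (a b x0 ys k : R) : 0 < b + a - a ^ 2 ->
  (forall y, F_ab a b x0 y <= - k * (y - ys) ^ 2) ->
  exists A B, 0 <= A /\ 0 <= B /\ forall x y,
    F_ab a b x y <= - k * Rabs (y - ys) ^ 2 + Rabs (x - x0) * (A + B * Rabs (y - ys)).
Proof.
  intros HD Hdecay. set (D := b + a - a ^ 2) in *.
  set (A := Rabs (- x0 + a * (ys - a * x0) / D)). set (B := Rabs (a / D)).
  exists A, B. split; [apply Rabs_pos|]. split; [apply Rabs_pos|]. intros x y.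
  rewrite (F_ab_shift a b x0 x y HD), pow2_abs. fold D.
  assert (Hcurv : 0 <= (1 / 2 + a ^ 2 / (2 * D)) * (x - x0) ^ 2).
  { apply Rmult_le_pos; [|apply pow2_ge_0].
    assert (0 <= a ^ 2 / (2 * D)) by (apply Rdiv_le_0_compat; [apply pow2_ge_0 | lra]). lra. }
  assert (Hslope : Rabs (- x0 + a * (y - a * x0) / D) <= A + B * Rabs (y - ys)).
  { replace (- x0 + a * (y - a * x0) / D) with ((- x0 + a * (ys - a * x0) / D) + a / D * (y - ys))
      by (field; lra).
    unfold A, B. rewrite <- Rabs_mult. apply Rabs_triang. }
  assert (Hlin : (x - x0) * (- x0 + a * (y - a * x0) / D)
                 <= Rabs (x - x0) * (A + B * Rabs (y - ys))).
  { eapply Rle_trans; [apply Rle_abs|]. rewrite Rabs_mult.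
    apply Rmult_le_compat_l; [apply Rabs_pos | exact Hslope]. }
  pose proof (Hdecay y). lra.
Qed.

Lemma quadratic_window (k A B : R) : 0 < k -> 0 <= A -> 0 <= B ->
  exists alpha beta, 0 < alpha /\ 0 < beta /\ forall eps d, 0 < eps < 1 -> 0 <= d ->
    (alpha * sqrt eps <= d -> - k * d ^ 2 + eps * (A + B * d) < 0) /\
    (d < alpha * sqrt eps -> - k * d ^ 2 + eps * (A + B * d) < beta * sqrt eps).
Proof.
  intros Hk HA HB.
  set (alpha := 1 + (A + B) / k).
  assert (Hal : k * alpha = k + A + B) by (unfold alpha; field; lra).
  assert (Hal1 : 1 <= alpha).
  { assert (0 <= (A + B) / k) by (apply Rdiv_le_0_compat; lra). unfold alpha. lra. }
  exists alpha, (A + B * alpha + 1). split; [lra|]. split; [nra|].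
  intros eps d Heps Hd.
  assert (Hse : eps = sqrt eps * sqrt eps) by (symmetry; apply sqrt_sqrt; lra).
  assert (Hse0 : 0 < sqrt eps) by (apply sqrt_lt_R0; lra).
  set (se := sqrt eps) in *. clearbody se. subst eps.
  assert (Hse1 : se < 1) by nra.
  split; intros Hwin.
  - assert (Hd0 : 0 < d) by nra.
    assert (Hconst : se * se * (A + B * d) <= se * d * (A + B)).
    { assert (se * A <= d * A) by (apply Rmult_le_compat_r; nra).
      assert (se * se <= se) by nra.
      assert (se * se * (B * d) <= se * (B * d)) by (apply Rmult_le_compat_r; nra).
      nra. }
    assert (Hquad : se * d * (k + A + B) <= k * d * d).
    { rewrite <- Hal. assert (k * d * (alpha * se) <= k * d * d) by (apply Rmult_le_compat_l; nra).
      lra. }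
    assert (0 < se * d * k) by (apply Rmult_lt_0_compat; nra).
    nra.
  - assert (Hdal : d <= alpha) by nra.
    assert (se * se * (B * d) <= se * se * (B * alpha))
      by (apply Rmult_le_compat_l; [nra | apply Rmult_le_compat_l; lra]).
    assert (se * se * (B * alpha) <= se * (B * alpha)) by (apply Rmult_le_compat_r; nra).
    assert (se * se * A <= se * A) by (apply Rmult_le_compat_r; nra).
    assert (0 <= k * d ^ 2) by nra.
    nra.
Qed.

Lemma F_ab_quadratic_decay (a b x0 ys : R) : 0 < b -> a - a ^ 2 < b ->
  (forall y, F_ab a b x0 y <= 0) -> F_ab a b x0 ys = 0 ->
  0 < b + a - a ^ 2 /\
  exists k, 0 < k /\ forall y, F_ab a b x0 y <= - k * (y - ys) ^ 2.
Proof.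
  intros Hb Hab Hmax Hzero.
  assert (HD : 0 < b + a - a ^ 2) by exact (F_ab_denom_pos a b x0 0 Hb Hmax).
  split; [exact HD|].
  set (c := 1 / (2 * (b + a - a ^ 2)) - 1 / (4 * b)).
  assert (Hc : 0 < c).
  { unfold c. replace (1 / (2 * (b + a - a ^ 2)) - 1 / (4 * b))
      with ((b - (a - a ^ 2)) / (4 * b * (b + a - a ^ 2))) by (field; lra).
    apply Rdiv_lt_0_compat; [lra | apply Rmult_lt_0_compat; lra]. }
  exists (c / 2). split; [lra|].
  apply (quadratic_decay_of_midpoint (F_ab a b x0)); [|exact Hmax | exact Hzero].
  intros y z. apply F_ab_midpoint; assumption.
Qed.

Theorem lemma3p2 (gamma : nat -> R) (E0 y0 : R) :
  admissible_mixture gamma ->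
  genuine_mixture gamma ->
  pure_like gamma ->
  is_E0 gamma E0 ->
  is_y0 gamma E0 y0 ->
  exists alpha beta : R, 0 < alpha /\ 0 < beta /\
  exists eps0 : R, 0 < eps0 /\
  forall eps : R, 0 < eps < eps0 ->
    (forall x y : R, - E0 - eps < x < - E0 + eps ->
       ~ (- y0 - alpha * sqrt eps < y < - y0 + alpha * sqrt eps) ->
       F gamma x y < 0) /\
    (forall x y : R, - E0 - eps < x < - E0 + eps ->
       - y0 - alpha * sqrt eps < y < - y0 + alpha * sqrt eps ->
       F gamma x y < beta * sqrt eps).
Proof.
  intros Hadm _ Hpl [[Hub Hlub] _] Hy0.
  assert (Hmax : forall y, F gamma (- E0) y <= 0) by (intros y; apply Hub; exists y; reflexivity).
  assert (Hzero : F gamma (- E0) (- y0) = 0).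
  { apply Rle_antisym; [apply Hmax | apply Hlub; intros v [y ->]; apply Hy0]. }
  pose proof (xi2_pos gamma Hadm Hpl) as Hb.
  change (F gamma) with (F_ab (xi1 gamma) (xi2 gamma)) in *.
  destruct (F_ab_quadratic_decay _ _ _ _ Hb (xi2_gt_of_G_pos _ _ Hb Hpl) Hmax Hzero)
    as [HD [k [Hk Hdecay]]].
  destruct (F_ab_perturbation _ _ _ _ _ HD Hdecay) as (A & B & HA & HB & Hpert).
  destruct (quadratic_window k A B Hk HA HB) as (alpha & beta & Hal & Hbe & Hwin).
  exists alpha, beta. split; [exact Hal|]. split; [exact Hbe|].
  exists 1. split; [lra|]. intros eps Heps.
  assert (Hbound : forall x y, - E0 - eps < x < - E0 + eps ->
    F_ab (xi1 gamma) (xi2 gamma) x y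
    <= - k * Rabs (y - - y0) ^ 2 + eps * (A + B * Rabs (y - - y0))).
  { intros x y Hx. eapply Rle_trans; [apply Hpert|]. apply Rplus_le_compat_l.
    apply Rmult_le_compat_r; [pose proof (Rabs_pos (y - - y0)); nra|].
    left. apply Rabs_lt_between'. exact Hx. }
  split; intros x y Hx Hy;
    destruct (Hwin eps (Rabs (y - - y0)) Heps (Rabs_pos _)) as [Hout Hin];
    (eapply Rle_lt_trans; [apply Hbound, Hx|]).
  - apply Hout, Rnot_lt_le. intros Hlt. apply Hy, Rabs_lt_between', Hlt.
  - apply Hin, Rabs_lt_between', Hy.
Qed.
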